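(* Let $D,n,m,r\ge1$. For $0\le i<D$ let $M_i\in\mathbb{F}[x]^{r\times r}$ and $N_i\in\mathbb{F}[y]^{r\times r}$ have entries of degree $<n$, and let $f_i\in\mathbb{F}[x]$, $g_i\in\mathbb{F}[y]$ have degree $\le m$. Let $\omega\in\mathbb{F}$ have multiplicative order $\ge (Dnm)^2$. Let $\beta_0,\dots,\beta_{r^2-1}\in\mathbb{F}$ be distinct and let $p_0,\dots,p_{r^2-1}$ be the corresponding Lagrange interpolation polynomials. Then for all but fewer than $(Dnmr)^2$ values of $\alpha\in\mathbb{F}$, $$\mathrm{span}\Big\{\prod_{i=0}^{D-1}M_i(f_i(x))\cdot\prod_{i=0}^{D-1}N_i(g_i(y))\Big\}_{x,y\in\mathbb{F}}\subseteq\mathrm{span}\Big\{\prod_{i=0}^{D-1}M_i\Big(\sum_{\ell=0}^{r^2-1}f_i(\omega^\ell\alpha)p_\ell(z)\Big)\cdot\prod_{i=0}^{D-1}N_i\Big(\sum_{\ell=0}^{r^2-1}g_i((\omega^\ell\alpha)^{Dnm})p_\ell(z)\Big)\Big\}_{z\in\mathbb{F}}.$$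
   Context: Products $\prod_{i=0}^{D-1}$ of matrices are taken in increasing order of $i$ from left to right. Given $s$ and distinct $\beta_0,\dots,\beta_{s-1}\in\mathbb{F}$, the Lagrange interpolation polynomials are the unique $p_\ell\in\mathbb{F}[t]$ of degree $<s$ with $p_\ell(\beta_i)=1$ if $i=\ell$ and $0$ otherwise, for $i,\ell\in\{0,\dots,s-1\}$. Spans are $\mathbb{F}$-linear spans in $\mathbb{F}^{r\times r}$. *)

From HB Require Import structures.
From mathcomp Require Import all_boot all_order all_algebra.
Set Implicit Arguments. Unset Strict Implicit. Unset Printing Implicit Defensive.
Import GRing.Theory.
Local Open Scope ring_scope.

Definition mxprod (F : fieldType) (r D : nat) (A : 'I_D -> 'M[F]_r) : 'M[F]_r :=
  \big[mulmx/1%:M]_(i < D) A i.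

Definition mx_eval (F : fieldType) (r : nat) (M : 'M[{poly F}]_r) (t : F) : 'M[F]_r :=
  map_mx (fun p => p.[t]) M.

Definition in_span (F : fieldType) (r : nat) (T : Type) (B : T -> 'M[F]_r)
    (A : 'M[F]_r) : Prop :=
  exists (k : nat) (zs : 'I_k -> T) (c : 'I_k -> F),
    A = \sum_(j < k) c j *: B (zs j).

Definition span_sub (F : fieldType) (r : nat) (T U : Type)
    (A : T -> 'M[F]_r) (B : U -> 'M[F]_r) : Prop :=
  forall X : 'M[F]_r, in_span A X -> in_span B X.

From HB Require Import structures.
From mathcomp Require Import all_boot all_order all_algebra.
From mathcomp Require Import zify perm.
From Stdlib Require Import Classical.
Import GRing.Theory.
Local Open Scope ring_scope.

(* Write T = Dnm.  Composing the entries of M_i with f_i (resp. N_i with g_i)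
   and multiplying, P(t) = prod_i M_i(f_i(t)) and Q(t) = prod_i N_i(g_i(t))
   are polynomial matrices whose entries have fewer than T coefficients, so
   P(x) Q(y) = sum_(a,b < T) x^a y^b P_a Q_b.  Hence every P(x) Q(y) lies in
   the span of the T^2 matrices c_(a + T b) = P_a Q_b, while on the curve
   y = x^T one gets exactly the generating function
   P(t) Q(t^T) = sum_(k < T^2) t^k c_k.

   The heart of the proof is a linear-algebra fact ([generic_rowspace]): if
   c_0, ..., c_(K-1) span a space of dimension d <= R and 1, w, ..., w^(K-1)
   are distinct, then for all alpha outside the roots of one nonzero
   polynomial of degree <= R (K - 1), the R vectors sum_k (w^l alpha)^k c_k,
   l < R, already span all of the c_k.  It is proved by putting the c_k in
   echelon form with pivots piv_j: the relevant d x d determinant, as a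
   polynomial in alpha, is alpha^(sum piv_j) times a polynomial whose
   constant term is a nonzero Vandermonde determinant in the w^(piv_j).

   Finally, the Lagrange polynomials p_l turn the evaluation z = beta_l of the
   right-hand family into the point t = w^l alpha of the curve, which places
   every P(x) Q(y) in the span of the right-hand family. *)

Set Implicit Arguments.
Unset Strict Implicit.

Lemma roots_in_seq (F : fieldType) (q : {poly F}) : q != 0 ->
  exists S : seq F, (size S < size q)%N /\ forall x, root q x -> x \in S.
Proof.
move: {2}(size q) (leqnn (size q)) => s; elim: s q => [|s IH] q hs hq.
  by move: hq; rewrite -size_poly_eq0 -leqn0 hs.
have [[x hx]|no_root] := classic (exists x, root q x); last first.
  exists [::]; split; first by rewrite size_poly_gt0.
  by move=> y hy; case: no_root; exists y.
have [q1 Eq] := factor_theorem _ _ hx.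
have hq1 : q1 != 0 by apply: contraNneq hq => E; rewrite Eq E mul0r.
have sz : size q = (size q1).+1.
  by rewrite Eq size_Mmonic ?monicXsubC // size_XsubC addn2.
have /IH/(_ hq1) [S [hS1 hS2]] : (size q1 <= s)%N by rewrite -ltnS -sz.
exists (x :: S); split; first by rewrite /= sz.
move=> y; rewrite Eq rootM root_XsubC => /orP [/hS2 hy|/eqP ->].
  by rewrite inE hy orbT.
by rewrite inE eqxx.
Qed.

Lemma expr_ord_inj (F : fieldType) (w : F) (N : nat) : w != 0 ->
  (forall k, (0 < k)%N -> (k < N)%N -> w ^+ k != 1) ->
  injective (fun i : 'I_N => w ^+ i).
Proof.
move=> w0 hw.
suff lt_neq : forall a b : 'I_N, (a < b)%N -> w ^+ a != w ^+ b.
  move=> a b /= eab; apply/eqP; case: (ltngtP a b) => [hab|hab|/val_inj ->//].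
    by have := lt_neq _ _ hab; rewrite eab eqxx.
  by have := lt_neq _ _ hab; rewrite eab eqxx.
move=> a b hab; rewrite -(subnKC (ltnW hab)) exprD -{1}[w ^+ a]mulr1.
rewrite (inj_eq (mulfI (expf_neq0 a w0))) eq_sym hw ?subn_gt0 //.
by rewrite (leq_ltn_trans (leq_subr _ _)).
Qed.

Lemma size_det_leq (F : fieldType) d (A : 'M[{poly F}]_d) s :
  (forall i j, (size (A i j) <= s.+1)%N) -> (size (\det A) <= (d * s).+1)%N.
Proof.
move=> hA; apply: leq_trans (size_sum _ _ _) _; apply/bigmax_leqP => sg _.
have size_prod : (size (\prod_i A i (sg i))%R <= (d * s).+1)%N.
  apply: leq_trans (size_poly_prod_leq _ _) _.
  have : (\sum_(i < d) size (A i (sg i)) <= \sum_(i < d) s.+1)%N.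
    by apply: leq_sum => i _; exact: hA.
  by rewrite sum_nat_const card_ord mulnS leq_subLR addnS ltnS.
by rewrite -signr_odd; case: (odd _); rewrite ?expr1 ?expr0 ?mulN1r ?mul1r ?size_polyN.
Qed.

Lemma sum_ord_sqr (V : zmodType) T (G : nat -> V) :
  \sum_(k < T * T) G k = \sum_(a < T) \sum_(b < T) G (a + T * b)%N.
Proof.
rewrite exchange_big /=.
suff sum_rows S : \sum_(k < T * S) G k = \sum_(b < S) \sum_(a < T) G (a + T * b)%N.
  exact: sum_rows.
elim: S => [|S IH]; first by rewrite muln0 !big_ord0.
rewrite big_ord_recr /= -IH mulnS addnC big_split_ord /=; congr (_ + _).
by apply: eq_bigr => a _; rewrite addnC.
Qed.

Lemma lagrange_select (F : fieldType) s (beta : 'I_s -> F) (p : 'I_s -> {poly F})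
    (c : 'I_s -> F) l :
  (forall i l, (p l).[beta i] = (i == l)%:R) ->
  \sum_(l' < s) c l' * (p l').[beta l] = c l.
Proof.
move=> hp; rewrite (bigD1 l) //= hp eqxx mulr1 big1 ?addr0 // => l' ne.
by rewrite hp eq_sym (negbTE ne) mulr0.
Qed.

Lemma span_sub_rowspace (F : fieldType) r (I J : Type)
    (A : I -> 'M[F]_r) (B : J -> 'M[F]_r) k (zs : 'I_k -> J) :
  (forall t, (mxvec (A t) <= \matrix_(l < k) mxvec (B (zs l)))%MS) ->
  span_sub A B.
Proof.
move=> hA X [k' [ts [c ->]]].
have : (mxvec (\sum_(j < k') c j *: A (ts j)) <= \matrix_(l < k) mxvec (B (zs l)))%MS.
  rewrite linear_sum; apply: summx_sub => j _.
  by rewrite linearZ /= scalemx_sub.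
case/submxP => u hu; exists k, zs, (fun l => u 0 l).
apply: (can_inj mxvecK); rewrite hu mulmx_sum_row linear_sum.
by apply: eq_bigr => l _; rewrite linearZ rowK.
Qed.

Section PolyMatrix.

Variables (F : fieldType) (r : nat).

Definition pmxprod D (A : 'I_D -> 'M[{poly F}]_r) : 'M[{poly F}]_r :=
  \big[mulmx/1%:M]_(i < D) A i.

Definition comp_mx (A : 'M[{poly F}]_r) (h : {poly F}) : 'M[{poly F}]_r :=
  map_mx (fun q => q \Po h) A.

Definition coefmx (A : 'M[{poly F}]_r) k : 'M[F]_r :=
  map_mx (fun q : {poly F} => q`_k) A.

(* Evaluation is a ring morphism, so it commutes with ordered products. *)
Lemma mx_eval_pmxprod D (A : 'I_D -> 'M[{poly F}]_r) t :
  mx_eval (pmxprod A) t = mxprod (fun i => mx_eval (A i) t).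
Proof.
rewrite /mx_eval /mxprod /pmxprod -[fun p => _]/(horner_eval t : {poly F} -> F).
elim/big_rec2: _ => [|i X Y _ eXY]; first by rewrite map_scalar_mx rmorph1.
by rewrite map_mxM eXY.
Qed.

Lemma mx_eval_comp (A : 'M[{poly F}]_r) h x :
  mx_eval A h.[x] = mx_eval (comp_mx A h) x.
Proof. by apply/matrixP => i j; rewrite !mxE horner_comp. Qed.

Lemma mx_eval_coefmx (A : 'M[{poly F}]_r) T t :
  (forall a b, (size (A a b) <= T)%N) ->
  mx_eval A t = \sum_(k < T) t ^+ k *: coefmx A k.
Proof.
move=> hA; apply/matrixP => i j; rewrite !mxE summxE (horner_coef_wide _ (hA i j)).
by apply: eq_bigr => k _; rewrite !mxE mulrC.
Qed.

Lemma size_comp_mx (A : 'M[{poly F}]_r) (h : {poly F}) n m :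
  (forall a b, (size (A a b) <= n)%N) -> (size h <= m.+1)%N ->
  forall a b, (size (comp_mx A h a b) <= (n.-1 * m).+1)%N.
Proof.
move=> hA hh a b; rewrite mxE (leq_trans (size_comp_poly_leq _ _)) // ltnS.
by apply: leq_mul; [move: (hA a b) | move: hh]; rewrite -!subn1; lia.
Qed.

Lemma size_pmxprod D (A : 'I_D -> 'M[{poly F}]_r) s :
  (forall i a b, (size (A i a b) <= s.+1)%N) ->
  forall a b, (size (pmxprod A a b) <= (D * s).+1)%N.
Proof.
elim: D A => [|D IH] A hA a b.
  by rewrite /pmxprod big_ord0 mxE; case: (a == b); rewrite ?size_poly1 ?size_poly0.
rewrite /pmxprod big_ord_recl mxE; apply: leq_trans (size_sum _ _ _) _.
apply/bigmax_leqP => k _; rewrite (leq_trans (size_polyMleq _ _)) //.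
have := IH (fun i => A (lift ord0 i)) (fun i => hA _) k b.
have := hA ord0 a k; rewrite /pmxprod; move: (size _) (size _) => x y; rewrite -subn1; lia.
Qed.

End PolyMatrix.

(* Echelon factorisation E = L B of the rows of E with pivots: B is row-free,
   and row piv_j of L is the j-th unit vector while the rows of L above it
   vanish in column j.  It is built by scanning the rows of E in order. *)
Section Echelon.

Variables (F : fieldType) (K R : nat) (E : 'M[F]_(K, R)).

Definition echelon_prefix k d (B : 'M[F]_(d, R)) (L : 'I_K -> 'rV[F]_d)
    (piv : 'I_d -> nat) : Prop :=
  [/\ row_free B, forall j, (piv j < k)%N, injective piv,
      forall i : 'I_K, (i < k)%N -> row i E = L i *m B &
      forall (i : 'I_K) j, (i <= piv j)%N -> L i 0 j = (i == piv j :> nat)%:R].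

Lemma echelon_prefix0 : echelon_prefix 0 (0 : 'M_(0, R)) (fun _ => 0) (fun _ => 0%N).
Proof. by split => // [|[]//|[]//|? []//]; rewrite /row_free eqn_leq rank_leq_row. Qed.

Lemma echelon_prefix_old k d (B : 'M[F]_(d, R)) L piv (i0 : 'I_K) (u : 'rV[F]_d) :
  i0 = k :> nat -> echelon_prefix k B L piv -> row i0 E = u *m B ->
  echelon_prefix k.+1 B (fun i => if val i == k then u else L i) piv.
Proof.
move=> ei0 [hB hpiv hinj hrow hL] hu; split => //.
- by move=> j; apply: ltn_trans (hpiv j) _.
- move=> i; rewrite ltnS leq_eqVlt => /orP [/eqP ei|ltik].
    have -> : i = i0 by apply: val_inj; rewrite /= ei ei0.
    by rewrite /= ei0 eqxx hu.
  by rewrite /= (ltn_eqF ltik) hrow.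
- move=> i j hij; case: eqP => ei; last exact: hL.
  by have := hpiv j; rewrite -ei ltnNge hij.
Qed.

Lemma echelon_prefix_new k d (B : 'M[F]_(d, R)) L piv (i0 : 'I_K) :
  i0 = k :> nat -> echelon_prefix k B L piv -> ~~ (row i0 E <= B)%MS ->
  echelon_prefix k.+1 (col_mx B (row i0 E))
    (fun i => if (val i < k)%N then row_mx (L i) 0 else row_mx 0 1)
    (fun j => match split j with inl j1 => piv j1 | inr _ => k end).
Proof.
move=> ei0 [hB hpiv hinj hrow hL] hv; split.
- have sB : (B < col_mx B (row i0 E))%MS.
    by rewrite ltmxE -addsmxE addsmxSl col_mx_sub negb_and hv orbT.
  move: sB; rewrite ltmxErank => /andP [_]; move/eqP: hB => -> ltd.
  by rewrite -row_leq_rank; apply: leq_trans ltd; rewrite addn1.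
- by move=> j; case: splitP => [j1 _|j1 _] //; apply: ltn_trans (hpiv j1) _.
- move=> j1 j2; case: splitP => [a1 e1|a1 e1]; case: splitP => [a2 e2|a2 e2].
  + by move/hinj => ea; apply: val_inj; rewrite /= e1 e2 ea.
  + by move=> ea; have := hpiv a1; rewrite ea ltnn.
  + by move=> ea; have := hpiv a2; rewrite -ea ltnn.
  + by move=> _; apply: val_inj; rewrite /= e1 e2 !ord1.
- move=> i; rewrite ltnS leq_eqVlt => /orP [/eqP ei|ltik].
    have -> : i = i0 by apply: val_inj; rewrite /= ei ei0.
    by rewrite /= ei0 ltnn mul_row_col mul0mx add0r mul1mx.
  by rewrite /= ltik mul_row_col mul0mx addr0 hrow.
- move=> i j; case: splitP => [j1 ej|j1 ej] hij.
  + have -> : j = lshift 1 j1 by apply: val_inj.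
    by rewrite (leq_ltn_trans hij (hpiv j1)) row_mxEl hL.
  + have -> : j = rshift d j1 by apply: val_inj.
    case: ltnP => hik; rewrite row_mxEr mxE; first by rewrite (ltn_eqF hik).
    have -> : nat_of_ord i = k by apply/eqP; rewrite eqn_leq hij.
    by rewrite ord1 !eqxx.
Qed.

Lemma echelon_prefix_ex k : (k <= K)%N ->
  exists d (B : 'M[F]_(d, R)) L piv, echelon_prefix k B L piv.
Proof.
elim: k => [_|k IH hk]; first by exists 0%N, 0, (fun _ => 0), (fun _ => 0%N);
  exact: echelon_prefix0.
have [d [B [L [piv hE]]]] := IH (ltnW hk).
have [/submxP [u hu]|hv] := boolP (row (Ordinal hk) E <= B)%MS.
  by exists d, B, (fun i => if val i == k then u else L i), piv;
    exact: echelon_prefix_old hE hu.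
by do 4 eexists; exact: echelon_prefix_new hE hv.
Qed.

Lemma echelon_factor :
  exists d (B : 'M[F]_(d, R)) (L : 'M[F]_(K, d)) (piv : 'I_d -> 'I_K),
  [/\ row_free B, E = L *m B, injective piv &
      forall (i : 'I_K) j, (i <= piv j)%N -> L i j = (i == piv j)%:R].
Proof.
have [d [B [L [piv [hB hpiv hinj hrow hL]]]]] := echelon_prefix_ex (leqnn K).
exists d, B, (\matrix_i L i), (fun j => Ordinal (hpiv j)); split => //.
- by apply/row_matrixP => i; rewrite row_mul rowK hrow.
- by move=> j1 j2 /(congr1 val) /hinj.
- by move=> i j hij; rewrite mxE hL.
Qed.

End Echelon.

Section GenericRowspace.

Variables (F : fieldType) (w : F).

Definition twisted_vdm Lr K (a : F) : 'M[F]_(Lr, K) :=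
  \matrix_(l, k) (w ^+ l * a) ^+ k.

(* The polynomial version of [twisted_vdm d K 'X *m L]. *)
Definition gen_mx K d (L : 'M[F]_(K, d)) : 'M[{poly F}]_d :=
  \matrix_(l, j) \sum_(i < K) ((w ^+ l) ^+ i * L i j) *: 'X^i.

Lemma gen_mx_eval K d (L : 'M[F]_(K, d)) a :
  map_mx (horner_eval a) (gen_mx L) = twisted_vdm d K a *m L.
Proof.
apply/matrixP => l j; rewrite !mxE horner_evalE horner_sum; apply: eq_bigr => i _.
by rewrite hornerZ hornerXn !mxE exprMn mulrAC.
Qed.

Lemma twisted_vdm_sub d Lr K a : (d <= Lr)%N ->
  (twisted_vdm d K a <= twisted_vdm Lr K a)%MS.
Proof.
move=> hd; apply/row_subP => l.
have -> : row l (twisted_vdm d K a) = row (widen_ord hd l) (twisted_vdm Lr K a).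
  by apply/rowP => k; rewrite !mxE.
exact: row_sub.
Qed.

Lemma size_det_gen_mx K d (L : 'M[F]_(K, d)) : (0 < K)%N ->
  (size (\det (gen_mx L)) <= (d * K.-1).+1)%N.
Proof.
move=> hK; apply: size_det_leq => l j; rewrite mxE.
apply: leq_trans (size_sum _ _ _) _; apply/bigmax_leqP => i _.
by rewrite (leq_trans (size_scale_leq _ _)) // size_polyXn prednK.
Qed.

(* The key nondegeneracy: for L in echelon form with pivots piv, det (gen_mx L)
   is X^(sum piv_j) times a polynomial whose value at 0 is the Vandermonde
   determinant of the distinct w^(piv_j). *)
Lemma det_gen_mx_neq0 K d (L : 'M[F]_(K, d)) (piv : 'I_d -> 'I_K) :
  injective (fun i : 'I_K => w ^+ i) -> injective piv ->
  (forall (i : 'I_K) j, (i <= piv j)%N -> L i j = (i == piv j)%:R) ->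
  \det (gen_mx L) != 0.
Proof.
move=> hw hinj hL.
pose Hp : 'M[{poly F}]_d :=
  \matrix_(l, j) \sum_(i < K) ((w ^+ l) ^+ i * L i j) *: 'X^(i - piv j).
have shift : gen_mx L = Hp *m diag_mx (\row_j 'X^(piv j)).
  apply/matrixP => l j; rewrite mul_mx_diag !mxE big_distrl /=.
  apply: eq_bigr => i _; rewrite -scalerAl -exprD.
  case: (leqP (piv j) i) => h; first by rewrite subnK.
  by rewrite hL ?(ltnW h) // -val_eqE /= (ltn_eqF h) mulr0 !scale0r.
have Hp0 : map_mx (horner_eval 0) Hp = Vandermonde d (\row_j w ^+ piv j).
  apply/matrixP => l j; rewrite !mxE horner_evalE horner_sum (bigD1 (piv j)) //=.
  rewrite big1 => [|i /eqP ne]; rewrite hornerZ hornerXn.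
    by rewrite subnn expr0 mulr1 hL // eqxx mulr1 addr0 exprAC.
  case: (ltngtP i (piv j)) => h; last by case: ne; apply: val_inj.
    by rewrite hL ?(ltnW h) // -val_eqE /= (ltn_eqF h) mulr0 mul0r.
  by rewrite expr0n subn_eq0 leqNgt h mulr0.
have vdm_neq0 : \det (Vandermonde d (\row_j w ^+ piv j)) != 0.
  rewrite det_Vandermonde; apply/prodf_neq0 => i _; apply/prodf_neq0 => j hij.
  rewrite !mxE subr_eq0; apply: contraTneq hij => /hw /hinj ->.
  by rewrite ltnn.
rewrite shift det_mulmx det_diag mulf_neq0 //; last first.
  by apply/prodf_neq0 => j _; rewrite mxE monic_neq0 // monicXn.
apply: contra_neq vdm_neq0 => Hp_eq0.
by rewrite -Hp0 det_map_mx Hp_eq0 rmorph0.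
Qed.

Lemma generic_rowspace K R (E : 'M[F]_(K, R)) :
  (0 < K)%N -> injective (fun i : 'I_K => w ^+ i) ->
  exists Phi : {poly F}, [/\ Phi != 0, (size Phi <= (R * K.-1).+1)%N &
    forall a Lr, (R <= Lr)%N -> ~~ root Phi a ->
      (E <= twisted_vdm Lr K a *m E)%MS].
Proof.
move=> hK hw; have [d [B [L [piv [hB eE hinj hL]]]]] := echelon_factor E.
have hdR : (d <= R)%N by rewrite (leq_trans _ (rank_leq_col B)) // row_leq_rank.
exists (\det (gen_mx L)); split.
- exact: det_gen_mx_neq0 hw hinj hL.
- by rewrite (leq_trans (size_det_gen_mx _ hK)) // ltnS leq_mul2r hdR orbT.
move=> a Lr hRL hroot.
have hU : twisted_vdm d K a *m L \in unitmx.
  by rewrite -gen_mx_eval unitmxE det_map_mx unitfE.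
have sB : (B <= twisted_vdm d K a *m E)%MS.
  by rewrite eE mulmxA -{1}(mulKmx hU B) submxMl.
apply: submx_trans (_ : (E <= B)%MS) _; first by rewrite {1}eE submxMl.
apply: submx_trans sB _; apply: submxMr.
exact: twisted_vdm_sub (leq_trans hdR hRL).
Qed.

End GenericRowspace.

Section BivariateSpan.

Variables (F : fieldType) (r T : nat) (P Q : 'M[{poly F}]_r).
Hypotheses (hP : forall a b, (size (P a b) <= T)%N)
           (hQ : forall a b, (size (Q a b) <= T)%N).

(* Row a + T b is the flattened product P_a Q_b of coefficient matrices. *)
Definition bicoef : 'M[F]_(T * T, r * r) :=
  \matrix_(k < T * T) mxvec (coefmx P (k %% T) *m coefmx Q (k %/ T)).

Lemma mx_eval_mul_coef x y :
  mx_eval P x *m mx_eval Q y =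
  \sum_(a < T) \sum_(b < T) (x ^+ a * y ^+ b) *: (coefmx P a *m coefmx Q b).
Proof.
rewrite (mx_eval_coefmx _ hP) (mx_eval_coefmx _ hQ) mulmx_suml.
apply: eq_bigr => a _; rewrite mulmx_sumr; apply: eq_bigr => b _.
by rewrite -scalemxAl -scalemxAr scalerA.
Qed.

Lemma bicoef_index (a b : 'I_T) :
  ((a + T * b) %% T = a)%N /\ ((a + T * b) %/ T = b)%N.
Proof.
have hT : (0 < T)%N by apply: leq_ltn_trans (ltn_ord a).
by rewrite addnC mulnC modnMDl divnMDl // modn_small // divn_small // addn0.
Qed.

Lemma eval_mul_sub_bicoef x y :
  (mxvec (mx_eval P x *m mx_eval Q y) <= bicoef)%MS.
Proof.
rewrite mx_eval_mul_coef linear_sum; apply/summx_sub => a _.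
rewrite linear_sum; apply/summx_sub => b _; rewrite linearZ scalemx_sub //.
have hk : (a + T * b < T * T)%N.
  by have := ltn_ord a; have := ltn_ord b; move: (nat_of_ord a) (nat_of_ord b); nia.
have [ea eb] := bicoef_index a b.
apply: submx_trans (row_sub (Ordinal hk) bicoef).
by rewrite rowK /= ea eb submx_refl.
Qed.

Lemma eval_curve_bicoef t :
  mxvec (mx_eval P t *m mx_eval Q (t ^+ T)) = (\row_(k < T * T) t ^+ k) *m bicoef.
Proof.
rewrite mulmx_sum_row; under eq_bigr => k _ do rewrite rowK mxE.
rewrite (sum_ord_sqr T (fun k => t ^+ k *: mxvec (coefmx P (k %% T) *m coefmx Q (k %/ T)))).
rewrite mx_eval_mul_coef linear_sum; apply: eq_bigr => a _.
rewrite linear_sum; apply: eq_bigr => b _; have [-> ->] := bicoef_index a b.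
by rewrite linearZ -exprM -exprD.
Qed.

Lemma bivariate_span (w : F) : (0 < T)%N ->
  injective (fun i : 'I_(T * T) => w ^+ i) ->
  exists S : seq F, (size S <= r * r * (T * T).-1)%N /\
    forall a, a \notin S -> forall Lr, (r * r <= Lr)%N -> forall x y,
      (mxvec (mx_eval P x *m mx_eval Q y) <=
       \matrix_(l < Lr) mxvec (mx_eval P (w ^+ l * a) *m
                               mx_eval Q ((w ^+ l * a) ^+ T)))%MS.
Proof.
move=> hT hw; have hK : (0 < T * T)%N by rewrite muln_gt0 hT.
have [Phi [Phi0 szPhi hPhi]] := generic_rowspace bicoef hK hw.
have [S [szS hS]] := roots_in_seq Phi0.
exists S; split; first by rewrite -ltnS (leq_trans szS szPhi).
move=> a aS Lr hLr x y; apply: submx_trans (eval_mul_sub_bicoef x y) _.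
have -> : \matrix_(l < Lr) mxvec (mx_eval P (w ^+ l * a) *m
            mx_eval Q ((w ^+ l * a) ^+ T)) = twisted_vdm w Lr (T * T) a *m bicoef.
  apply/row_matrixP => l; rewrite rowK row_mul eval_curve_bicoef.
  by congr (_ *m _); apply/rowP => k; rewrite !mxE.
by apply: hPhi hLr _; apply: contra aS; exact: hS.
Qed.

End BivariateSpan.

Unset Implicit Arguments.
Set Strict Implicit.

Theorem lemma3p7 (F : fieldType) (D n m r : nat)
  (hD : (1 <= D)%N) (hn : (1 <= n)%N) (hm : (1 <= m)%N) (hr : (1 <= r)%N)
  (M N : 'I_D -> 'M[{poly F}]_r)
  (hM : forall i a b, (size (M i a b) <= n)%N)
  (hN : forall i a b, (size (N i a b) <= n)%N)
  (f g : 'I_D -> {poly F})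
  (hf : forall i, (size (f i) <= m.+1)%N)
  (hg : forall i, (size (g i) <= m.+1)%N)
  (w : F) (hw0 : w != 0)
  (hword : forall k : nat, (0 < k)%N -> (k < (D * n * m) ^ 2)%N -> w ^+ k != 1)
  (beta : 'I_(r ^ 2) -> F) (hbeta : injective beta)
  (p : 'I_(r ^ 2) -> {poly F})
  (hpsize : forall l, (size (p l) <= r ^ 2)%N)
  (hpval : forall i l, (p l).[beta i] = (i == l)%:R) :
  exists S : seq F, (size S < (D * n * m * r) ^ 2)%N /\
    forall alpha : F, alpha \notin S ->
      span_sub
        (fun xy : F * F =>
           mxprod (fun i => mx_eval (M i) (f i).[xy.1]) *m
           mxprod (fun i => mx_eval (N i) (g i).[xy.2]))
        (fun z : F =>
           mxprod (fun i => mx_eval (M i)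
              (\sum_(l < r ^ 2) (f i).[w ^+ l * alpha] * (p l).[z])) *m
           mxprod (fun i => mx_eval (N i)
              (\sum_(l < r ^ 2) (g i).[(w ^+ l * alpha) ^+ (D * n * m)] * (p l).[z]))).
Proof.
set T := (D * n * m)%N.
pose P := pmxprod (fun i => comp_mx (M i) (f i)).
pose Q := pmxprod (fun i => comp_mx (N i) (g i)).
have eval_P t : mxprod (fun i => mx_eval (M i) (f i).[t]) = mx_eval P t.
  by rewrite mx_eval_pmxprod; apply: eq_bigr => i _; exact: mx_eval_comp.
have eval_Q t : mxprod (fun i => mx_eval (N i) (g i).[t]) = mx_eval Q t.
  by rewrite mx_eval_pmxprod; apply: eq_bigr => i _; exact: mx_eval_comp.
have deg_T : ((D * (n.-1 * m)).+1 <= T)%N by rewrite /T; nia.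
have szP a b : (size (P a b) <= T)%N.
  by apply: leq_trans deg_T; apply: size_pmxprod => i; exact: size_comp_mx.
have szQ a b : (size (Q a b) <= T)%N.
  by apply: leq_trans deg_T; apply: size_pmxprod => i; exact: size_comp_mx.
have hw : injective (fun i : 'I_(T * T) => w ^+ i).
  by apply: expr_ord_inj => // k k0 kT; rewrite hword // -mulnn.
have [|S [szS hS]] := bivariate_span szP szQ _ hw; first by rewrite /T; nia.
exists S; split; first by move: szS; rewrite -mulnn /T; nia.
move=> alpha /hS span_PQ; apply: (span_sub_rowspace (zs := beta)) => -[x y] /=.
have nodes_P l : mxprod (fun i => mx_eval (M i)
      (\sum_(l0 < r ^ 2) (f i).[w ^+ l0 * alpha] * (p l0).[beta l])) =
    mx_eval P (w ^+ l * alpha).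
  by rewrite -eval_P; apply: eq_bigr => i _; rewrite lagrange_select.
have nodes_Q l : mxprod (fun i => mx_eval (N i)
      (\sum_(l0 < r ^ 2) (g i).[(w ^+ l0 * alpha) ^+ T] * (p l0).[beta l])) =
    mx_eval Q ((w ^+ l * alpha) ^+ T).
  by rewrite -eval_Q; apply: eq_bigr => i _; rewrite lagrange_select.
rewrite eval_P eval_Q; under eq_mx do rewrite nodes_P nodes_Q.
by apply: span_PQ; rewrite mulnn.
Qed.
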